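(* Let $G$ be a structured single-touch computation DAG, and consider its sequential execution (one processor, parsimonious work stealing, future thread first at every fork). Then for every touch $x$ in $G$, with corresponding fork $v$: (i) the future parent of $x$ is executed before the local parent of $x$; and (ii) the right child of $v$ is the node executed immediately after the future parent of $x$.
   Context: Computation model. A future-parallel computation is a finite DAG whose nodes are tasks. Every node has in-degree and out-degree in $\{1,2\}$, except a distinguished root node (in-degree $0$) and a distinguished final node (out-degree $0$). Edges are of three types: continuation edges, future edges and touch edges. A thread is a maximal chain of nodes connected by continuation edges. The main thread begins at the root and ends at the final node. Every other thread $t$ begins at a node with an incoming future edge from a node $v$ of another thread $t'$; then $v$ is the fork of $t$, $t'$ is the parent thread of $t$, and $t$ is the future thread at $v$. A fork $v$ has two children: the first node of $t$ (the left child) and the continuation successor of $v$ in $t'$ (the right child); both have in-degree $1$ and are not touches. The last node of every non-main thread has exactly one outgoing edge, which is a touch edge into another thread. If there is a touch edge from a node $v_1$ of thread $t_1$ to a node $v_2$ of thread $t_2\neq t_1$, and a continuation edge from $u_2$ to $v_2$, then $v_2$ is a touch of $t_1$ (a touch by $t_2$, i.e. it lies in $t_2$), $v_1$ is its future parent, $u_2$ its local parent, $t_1$ its future thread, and the fork of $t_1$ is its corresponding fork. A node $w$ is a descendant of a node $u$ if there is a directed path from $u$ to $w$. A DAG is a structured future-parallel computation if for the future thread $t$ of any fork $v$: (1) the local parents of the touches of $t$ are descendants of $v$, and (2) at least one touch of $t$ is a descendant of the right child of $v$. It is a structured single-touch computation if, in addition, each future thread $t$ spawned at a fork $v$ has exactly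 one touch, and this touch is a descendant of the right child of $v$ (its future parent is then the last node of $t$). Scheduler. In parsimonious work stealing with $P$ processors, each processor has a deque. A node is ready when all its parents have been executed. After executing a node of out-degree 1, a processor continues with its child if that child is ready. After executing a fork, it pushes one child onto the bottom of its deque and executes the other; ''future thread first'' means it executes the left child (first node of the future thread) and pushes the right child. When a processor has no node to execute, it pops the bottom node of its own deque if nonempty, and otherwise steals the top node of the deque of some other processor. The sequential execution is the execution with $P=1$. *)

From mathcomp Require Import all_boot.
Set Implicit Arguments. Unset Strict Implicit. Unset Printing Implicit Defensive.

(* Between two given nodes there is at most one edge of each type. *)
Record fcomp (V : finType) := Comp {
  cont : rel V;
  fut  : rel V;
  tch  : rel V;
  root : V;
  final : V }.

Section Defs.
Variables (V : finType) (G : fcomp V).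

Definition edge : rel V := fun u w => [|| cont G u w, fut G u w | tch G u w].

Definition indeg (w : V) : nat :=
  #|[set u | cont G u w]| + #|[set u | fut G u w]| + #|[set u | tch G u w]|.
Definition outdeg (u : V) : nat :=
  #|[set w | cont G u w]| + #|[set w | fut G u w]| + #|[set w | tch G u w]|.

Definition descendant (u w : V) : bool := connect edge u w.

(* threads = maximal chains of continuation edges: two nodes are in the
   same thread iff they are connected by continuation edges *)
Definition cont_sym : rel V := fun u w => cont G u w || cont G w u.
Definition same_thread (u w : V) : bool := connect cont_sym u w.
Definition in_main (u : V) : bool := same_thread (root G) u.
Definition thread_first (x : V) : bool := [forall u, ~~ cont G u x].
Definition thread_last (x : V) : bool := [forall w, ~~ cont G x w].

Definition is_fork (v : V) : bool := [exists f, fut G v f].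

(* x is a touch of the thread containing f, with future parent y and local
   parent u (y lies in that thread, x in a different thread) *)
Definition touch_of (f x : V) : Prop :=
  exists y u, [&& tch G y x, cont G u x, same_thread y f & ~~ same_thread y x].

Definition is_touch (x : V) : bool :=
  [exists y, exists u, [&& tch G y x, cont G u x & ~~ same_thread y x]].

Definition future_parallel : Prop :=
   (forall u w, edge u w -> ~~ connect edge w u) /\
   (forall w, if w == root G then indeg w = 0 else indeg w \in [:: 1; 2]) /\
   (forall u, if u == final G then outdeg u = 0 else outdeg u \in [:: 1; 2]) /\
   (forall u w w', cont G u w -> cont G u w' -> w = w') /\
   (forall u u' w, cont G u w -> cont G u' w -> u = u') /\
   (in_main (final G) /\ thread_last (final G)) /\
   (forall x, thread_first x -> ~~ in_main x ->
      exists v, fut G v x && ~~ same_thread v x) /\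
   (* a fork v has two children: the first node of its future thread (left
      child) and its continuation successor (right child); both have
      in-degree 1 and are not touches *)
   (forall v f, fut G v f -> thread_first f /\
      exists c, [/\ cont G v c, indeg f = 1, indeg c = 1,
                    ~~ is_touch f & ~~ is_touch c]) /\
   (forall y, thread_last y -> ~~ in_main y ->
      outdeg y = 1 /\ exists z, tch G y z && ~~ same_thread y z) /\
   (forall y z, tch G y z -> ~~ in_main y /\ ~~ same_thread y z).

Definition structured : Prop :=
  forall v f c, fut G v f -> cont G v c ->
    (forall x y u, tch G y x -> cont G u x -> same_thread y f ->
        ~~ same_thread y x -> descendant v u) /\
    (exists x, touch_of f x /\ descendant c x).

Definition structured_single_touch : Prop :=
  structured /\
  forall v f c, fut G v f -> cont G v c ->
    exists x, [/\ touch_of f x, descendant c x &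
                  forall x', touch_of f x' -> x' = x].

(* Sequential execution of parsimonious work stealing (P = 1, future thread
   first).  State: (executed nodes in execution order, node currently
   assigned to the processor, deque with its bottom at the head). *)
Definition state := (seq V * option V * seq V)%type.

Definition ready (done : seq V) (c : V) : bool :=
  [forall p, edge p c ==> (p \in done)].

Inductive step : state -> state -> Prop :=
  | step_fork ord x f c dq :
      fut G x f -> cont G x c ->
      step (ord, Some x, dq) (rcons ord x, Some f, c :: dq)
  | step_cont ord x c dq :
      ~~ is_fork x -> edge x c -> ready (rcons ord x) c ->
      step (ord, Some x, dq) (rcons ord x, Some c, dq)
  | step_stop ord x dq :
      ~~ is_fork x -> (forall c, edge x c -> ~~ ready (rcons ord x) c) ->
      step (ord, Some x, dq) (rcons ord x, None, dq)
  | step_pop ord y dq :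
      step (ord, None, y :: dq) (ord, Some y, dq).

Inductive steps : state -> state -> Prop :=
  | steps_refl s : steps s s
  | steps_cons s1 s2 s3 : step s1 s2 -> steps s2 s3 -> steps s1 s3.

(* [ord] is the sequential execution order: the run starting with the root
   terminates (no node to execute, empty deque; with P = 1 there is nobody
   to steal from) after executing the nodes of [ord] in this order. *)
Definition seq_execution (ord : seq V) : Prop :=
  steps ([::], Some (root G), [::]) (ord, None, [::]).

Definition executed_before (ord : seq V) (u w : V) : bool :=
  [&& u \in ord, w \in ord & index u ord < index w ord].

Definition executed_right_after (ord : seq V) (u w : V) : bool :=
  [&& u \in ord, w \in ord & index w ord == (index u ord).+1].

End Defs.

From mathcomp Require Import all_boot zify.
Set Implicit Arguments. Unset Strict Implicit. Unset Printing Implicit Defensive.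

Lemma connect_last_edge (T : finType) (r : rel T) a b :
  connect r a b -> a != b -> exists2 p, connect r a p & r p b.
Proof.
move=> /connectP [p Hp ->]; elim/last_ind: p Hp => [|p z _] /=; first by rewrite eqxx.
rewrite rcons_path last_rcons => /andP [Hp Hz] _.
by exists (last a p) => //; apply/connectP; exists p.
Qed.

Lemma connect_first_edge (T : finType) (r : rel T) a b :
  connect r a b -> a != b -> exists2 q, r a q & connect r q b.
Proof.
move=> /connectP [[|q p] Hp ->] /=; first by rewrite eqxx.
by case/andP: Hp => Haq Hp _; exists q => //; apply/connectP; exists p.
Qed.

Lemma card_gt0_mem (T : finType) (A : {set T}) a : a \in A -> 0 < #|A|.
Proof. by move=> Ha; apply/card_gt0P; exists a. Qed.

Lemma card_gt1_mem (T : finType) (A : {set T}) a b :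
  a \in A -> b \in A -> a != b -> 1 < #|A|.
Proof. by move=> Ha Hb Hab; apply/card_gt1P; exists a, b. Qed.

(* Acyclic relations on a finite type are well founded in both directions:
   strict ancestors have strictly fewer ancestors. *)
Section Acyclic.
Variables (T : finType) (r : rel T).
Hypothesis r_acyclic : forall a b, r a b -> ~~ connect r b a.

Lemma acyclic_neq a b : r a b -> a != b.
Proof. by move=> Hab; apply/eqP=> Eab; move: (r_acyclic Hab); rewrite Eab connect0. Qed.

Lemma connect_antisym a b : connect r a b -> connect r b a -> a = b.
Proof.
move=> Hab Hba; case: (eqVneq a b) => // Hne.
have [q Haq Hqb] := connect_first_edge Hab Hne.
by move: (r_acyclic Haq); rewrite (connect_trans Hqb Hba).
Qed.

Lemma ancestors_proper a b : connect r a b -> a != b ->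
  [set x | connect r x a] \proper [set x | connect r x b].
Proof.
move=> Hab Hne; apply/properP; split.
  by apply/subsetP=> x; rewrite !inE => Hxa; apply: connect_trans Hxa Hab.
exists b; rewrite !inE ?connect0 //; apply/negP=> Hba.
by move/eqP: Hne; apply; apply: connect_antisym.
Qed.

Lemma ancestor_ind (P : T -> Prop) :
  (forall z, (forall a, connect r a z -> a != z -> P a) -> P z) -> forall z, P z.
Proof.
move=> IH z; have [n] := ubnP #|[set x | connect r x z]|.
elim: n z => // n IHn z Hz; apply: IH => a Haz Hne; apply: IHn.
exact: leq_trans (proper_card (ancestors_proper Haz Hne)) Hz.
Qed.
End Acyclic.

Lemma descendant_ind (T : finType) (r : rel T) :
  (forall a b, r a b -> ~~ connect r b a) -> forall P : T -> Prop,
  (forall z, (forall a, connect r z a -> a != z -> P a) -> P z) -> forall z, P z.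
Proof.
move=> r_acyclic P IH; apply: (@ancestor_ind _ [rel x y | r y x]) => [a b /= Hba|z IHz].
  by rewrite connect_rev /=; apply: r_acyclic.
by apply: IH => a Hza Haz; apply: IHz => //; rewrite connect_rev.
Qed.

Section Computation.
Variables (V : finType) (G : fcomp V).
Hypothesis G_fp : future_parallel G.

Local Notation E := (edge G).
Local Notation st := (same_thread G).

Lemma edge_acyclic u w : E u w -> ~~ connect E w u.
Proof. by case: G_fp => H _; apply: H. Qed.
Lemma indeg_spec w :
  if w == root G then indeg G w = 0 else indeg G w \in [:: 1; 2].
Proof. by case: G_fp => _ [H _]; apply: H. Qed.
Lemma outdeg_spec u :
  if u == final G then outdeg G u = 0 else outdeg G u \in [:: 1; 2].
Proof. by case: G_fp => _ [_ [H _]]; apply: H. Qed.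
Lemma cont_functional u w w' : cont G u w -> cont G u w' -> w = w'.
Proof. by case: G_fp => _ [_ [_ [H _]]]; apply: H. Qed.
Lemma cont_injective u u' w : cont G u w -> cont G u' w -> u = u'.
Proof. by case: G_fp => _ [_ [_ [_ [H _]]]]; apply: H. Qed.
Lemma first_nonmain_forked x : thread_first G x -> ~~ in_main G x ->
  exists v, fut G v x && ~~ st v x.
Proof. by case: G_fp => _ [_ [_ [_ [_ [_ [H _]]]]]]; apply: H. Qed.
Lemma fork_spec v f : fut G v f -> thread_first G f /\
  exists c, [/\ cont G v c, indeg G f = 1, indeg G c = 1,
                ~~ is_touch G f & ~~ is_touch G c].
Proof. by case: G_fp => _ [_ [_ [_ [_ [_ [_ [H _]]]]]]]; apply: H. Qed.
Lemma last_nonmain_touches y : thread_last G y -> ~~ in_main G y ->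
  outdeg G y = 1 /\ exists z, tch G y z && ~~ st y z.
Proof. by case: G_fp => _ [_ [_ [_ [_ [_ [_ [_ [H _]]]]]]]]; apply: H. Qed.
Lemma touch_spec y z : tch G y z -> ~~ in_main G y /\ ~~ st y z.
Proof. by case: G_fp => _ [_ [_ [_ [_ [_ [_ [_ [_ H]]]]]]]]; apply: H. Qed.

Lemma edge_neq a b : E a b -> a != b.
Proof. exact: (acyclic_neq (@edge_acyclic)). Qed.

Lemma cont_edge a b : cont G a b -> E a b.
Proof. by move=> H; rewrite /edge H. Qed.
Lemma fut_edge a b : fut G a b -> E a b.
Proof. by move=> H; rewrite /edge H orbT. Qed.
Lemma tch_edge a b : tch G a b -> E a b.
Proof. by move=> H; rewrite /edge H !orbT. Qed.
Lemma cont_connect_edge a b : connect (cont G) a b -> connect E a b.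
Proof. by apply: connect_sub => x y H; apply: connect1; apply: cont_edge. Qed.

Lemma indeg_le2 w : indeg G w <= 2.
Proof.
have := indeg_spec w; case: (w == root G) => [->|] //.
by rewrite !inE => /orP [] /eqP ->.
Qed.

Lemma outdeg_le2 w : outdeg G w <= 2.
Proof.
have := outdeg_spec w; case: (w == final G) => [->|] //.
by rewrite !inE => /orP [] /eqP ->.
Qed.

Lemma no_edge_to_root p : ~~ E p (root G).
Proof.
have := indeg_spec (root G); rewrite eqxx /indeg => H0.
apply/negP=> /or3P [] Hp.
- have := @card_gt0_mem _ [set u | cont G u (root G)] p.
  by rewrite inE Hp => /(_ isT); lia.
- have := @card_gt0_mem _ [set u | fut G u (root G)] p.
  by rewrite inE Hp => /(_ isT); lia.
- have := @card_gt0_mem _ [set u | tch G u (root G)] p.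
  by rewrite inE Hp => /(_ isT); lia.
Qed.

Lemma st_refl a : st a a.
Proof. exact: connect0. Qed.
Lemma st_sym a b : st a b -> st b a.
Proof.
have cont_sym_sym : symmetric (cont_sym G) by move=> x y; rewrite /cont_sym orbC.
by rewrite /same_thread (sym_connect_sym cont_sym_sym).
Qed.
Lemma st_trans a b d : st a b -> st b d -> st a d.
Proof. exact: connect_trans. Qed.
Lemma cont_st a b : cont G a b -> st a b.
Proof. by move=> H; apply: connect1; rewrite /cont_sym H. Qed.
Lemma cont_connect_st a b : connect (cont G) a b -> st a b.
Proof. by apply: connect_sub => x y H; apply: cont_st. Qed.

(* Two nodes of a thread are joined by continuation edges, in one direction
   or the other, as continuation edges are functional and injective. *)
Lemma thread_chain a b : st a b -> connect (cont G) a b \/ connect (cont G) b a.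
Proof.
move/connectP=> [p Hp ->]; elim/last_ind: p Hp => [|p z IH] /=; first by left.
rewrite rcons_path last_rcons => /andP [/IH Hchain]; set z0 := last a p => Hz.
case/orP: Hz => Hz; case: Hchain => H.
- by left; apply: connect_trans H (connect1 Hz).
- have [Ez0|Hne] := eqVneq z0 a; first by left; rewrite -Ez0; apply: connect1.
  have [q Hq Hqa] := connect_first_edge H Hne.
  by rewrite (cont_functional Hq Hz) in Hqa; right.
- have [Ez0|Hne] := eqVneq a z0; first by right; rewrite Ez0; apply: connect1.
  have [q Haq Hq] := connect_last_edge H Hne.
  by rewrite (cont_injective Hq Hz) in Haq; left.
- by right; apply: connect_trans (connect1 Hz) H.
Qed.

Lemma not_first z : ~~ thread_first G z -> exists p, cont G p z.
Proof. by rewrite negb_forall => /existsP [p]; rewrite negbK; exists p. Qed.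
Lemma not_last z : ~~ thread_last G z -> exists p, cont G z p.
Proof. by rewrite negb_forall => /existsP [p]; rewrite negbK; exists p. Qed.

Lemma first_connect a b : thread_first G a -> st a b -> connect (cont G) a b.
Proof.
move=> Ha /thread_chain [] // H; have [->|Hne] := eqVneq b a; first exact: connect0.
have [p _ Hp] := connect_last_edge H Hne.
by move/forallP: Ha => /(_ p); rewrite Hp.
Qed.

Lemma last_connect a b : thread_last G b -> st a b -> connect (cont G) a b.
Proof.
move=> Hb /thread_chain [] // H; have [->|Hne] := eqVneq b a; first exact: connect0.
have [q Hq _] := connect_first_edge H Hne.
by move/forallP: Hb => /(_ q); rewrite Hq.
Qed.

Lemma first_unique a b : thread_first G a -> thread_first G b -> st a b -> a = b.
Proof.
move=> Ha Hb /(first_connect Ha) H; have [//|Hne] := eqVneq a b.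
have [p _ Hp] := connect_last_edge H Hne.
by move/forallP: Hb => /(_ p); rewrite Hp.
Qed.

Lemma exists_first a : exists2 f, thread_first G f & connect (cont G) f a.
Proof.
elim/(ancestor_ind edge_acyclic): a => z IH.
case Hz: (thread_first G z); first by exists z.
have [p Hpz] := not_first (negbT Hz).
have [f Hf Hfp] := IH p (connect1 (cont_edge Hpz)) (edge_neq (cont_edge Hpz)).
by exists f => //; apply: connect_trans Hfp (connect1 Hpz).
Qed.

Lemma exists_last a : exists2 l, thread_last G l & connect (cont G) a l.
Proof.
elim/(descendant_ind edge_acyclic): a => z IH.
case Hz: (thread_last G z); first by exists z.
have [p Hzp] := not_last (negbT Hz).
have Hpz : p != z by rewrite eq_sym edge_neq // cont_edge.
have [l Hl Hpl] := IH p (connect1 (cont_edge Hzp)) Hpz.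
by exists l => //; apply: connect_trans (connect1 Hzp) Hpl.
Qed.

Lemma root_first : thread_first G (root G).
Proof.
by apply/forallP=> u; apply/negP=> /cont_edge Hu; move: (no_edge_to_root u); rewrite Hu.
Qed.

Lemma main_first a : in_main G a -> thread_first G a -> a = root G.
Proof. by move=> Ha Hf; apply: first_unique Hf root_first (st_sym Ha). Qed.

Lemma nonmain_in_future_thread a : ~~ in_main G a -> exists w f, fut G w f /\ st f a.
Proof.
move=> Ha; have [f Hf Hfa] := exists_first a.
have Hfm : ~~ in_main G f.
  by apply: contra Ha => Hm; apply: st_trans Hm (cont_connect_st Hfa).
have [w /andP [Hwf _]] := first_nonmain_forked Hf Hfm.
by exists w, f; split => //; apply: cont_connect_st.
Qed.

Lemma fut_first v f : fut G v f -> thread_first G f.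
Proof. by case/fork_spec. Qed.

Lemma fut_no_cont v f p : fut G v f -> ~~ cont G p f.
Proof. by move/fut_first/forallP. Qed.

Lemma fut_other_thread v f : fut G v f -> ~~ st v f.
Proof.
move=> Hvf; apply/negP=> /st_sym /(first_connect (fut_first Hvf)) /cont_connect_edge Hfv.
by move: (edge_acyclic (fut_edge Hvf)); rewrite Hfv.
Qed.

Lemma fut_parent_unique v v' f : fut G v f -> fut G v' f -> v = v'.
Proof.
move=> Hvf Hv'f; have [_ [c [_ Hf1 _ _ _]]] := fork_spec Hvf.
have [//|Hne] := eqVneq v v'; have := @card_gt1_mem _ [set u | fut G u f] v v'.
by rewrite !inE Hvf Hv'f => /(_ isT isT Hne); move: Hf1; rewrite /indeg; lia.
Qed.

Lemma fut_no_touch v f p : fut G v f -> ~~ tch G p f.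
Proof.
move=> Hvf; have [_ [c [_ Hf1 _ _ _]]] := fork_spec Hvf; apply/negP=> Hpf.
have := @card_gt0_mem _ [set u | fut G u f] v; rewrite inE Hvf => /(_ isT).
have := @card_gt0_mem _ [set u | tch G u f] p; rewrite inE Hpf => /(_ isT).
by move: Hf1; rewrite /indeg; lia.
Qed.

Lemma fut_child_parent v f p : fut G v f -> E p f -> p = v.
Proof.
move=> Hvf; case/or3P=> Hpf.
- by move: (fut_no_cont p Hvf); rewrite Hpf.
- exact: fut_parent_unique Hpf Hvf.
- by move: (fut_no_touch p Hvf); rewrite Hpf.
Qed.

Lemma fork_right_child v f : fut G v f -> exists c, cont G v c.
Proof. by case/fork_spec=> _ [c [Hvc _]]; exists c. Qed.

Lemma right_child_not_touch v f c : fut G v f -> cont G v c -> ~~ is_touch G c.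
Proof.
move=> Hvf Hvc; have [_ [c' [Hvc' _ _ _ Hc']]] := fork_spec Hvf.
by rewrite (cont_functional Hvc Hvc').
Qed.

Lemma right_child_parent v f c p : fut G v f -> cont G v c -> E p c -> p = v.
Proof.
move=> Hvf Hvc; have [_ [c' [Hvc' _ Hc1 _ _]]] := fork_spec Hvf.
rewrite -(cont_functional Hvc Hvc') in Hc1.
have := @card_gt0_mem _ [set u | cont G u c] v; rewrite inE Hvc => /(_ isT) Hcont.
case/or3P=> Hpc.
- exact: cont_injective Hpc Hvc.
- have := @card_gt0_mem _ [set u | fut G u c] p; rewrite inE Hpc => /(_ isT).
  by move: Hc1; rewrite /indeg; lia.
- have := @card_gt0_mem _ [set u | tch G u c] p; rewrite inE Hpc => /(_ isT).
  by move: Hc1; rewrite /indeg; lia.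
Qed.

Lemma fut_child_unique v f f' : fut G v f -> fut G v f' -> f = f'.
Proof.
move=> Hvf Hvf'; have [c Hvc] := fork_right_child Hvf.
have [//|Hne] := eqVneq f f'; have := @card_gt1_mem _ [set u | fut G v u] f f'.
rewrite !inE Hvf Hvf' => /(_ isT isT Hne).
have := @card_gt0_mem _ [set u | cont G v u] c; rewrite inE Hvc => /(_ isT).
by have := outdeg_le2 v; rewrite /outdeg; lia.
Qed.

Lemma fork_thread_unique w1 f1 w2 f2 : fut G w1 f1 -> fut G w2 f2 -> st f1 f2 ->
  w1 = w2 /\ f1 = f2.
Proof.
move=> Hwf1 Hwf2 Hf12.
have Ef := first_unique (fut_first Hwf1) (fut_first Hwf2) Hf12; subst f2.
by split=> //; apply: fut_parent_unique Hwf1 Hwf2.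
Qed.

Lemma is_forkI v f : fut G v f -> is_fork G v.
Proof. by move=> Hvf; apply/existsP; exists f. Qed.

Lemma is_touchI y u x : tch G y x -> cont G u x -> is_touch G x.
Proof.
move=> Hyx Hux; have [_ Hyx'] := touch_spec Hyx.
by apply/existsP; exists y; apply/existsP; exists u; rewrite Hyx Hux Hyx'.
Qed.

Lemma touch_has_local_parent y x : tch G y x -> exists u, cont G u x.
Proof.
move=> Hyx; apply: not_first; apply/negP=> Hx.
case Hxm: (in_main G x).
  by move: (no_edge_to_root y); rewrite -(main_first Hxm Hx) tch_edge.
have [v /andP [Hvx _]] := first_nonmain_forked Hx (negbT Hxm).
by move: (fut_no_touch y Hvx); rewrite Hyx.
Qed.

Lemma touch_parent_unique y1 y2 u x : tch G y1 x -> tch G y2 x -> cont G u x -> y1 = y2.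
Proof.
move=> Hy1 Hy2 Hux; have [//|Hne] := eqVneq y1 y2.
have := @card_gt1_mem _ [set a | tch G a x] y1 y2.
rewrite !inE Hy1 Hy2 => /(_ isT isT Hne).
have := @card_gt0_mem _ [set a | cont G a x] u; rewrite inE Hux => /(_ isT).
by have := indeg_le2 x; rewrite /indeg; lia.
Qed.

Lemma touch_ofI f y x : tch G y x -> st y f -> touch_of G f x.
Proof.
move=> Hyx Hyf; have [u Hux] := touch_has_local_parent Hyx.
by exists y, u; rewrite Hyx Hux Hyf (touch_spec Hyx).2.
Qed.

Hypothesis G_sst : structured_single_touch G.

Lemma local_parent_below_fork w f y x u :
  fut G w f -> st f y -> tch G y x -> cont G u x -> descendant G w u.
Proof.
move=> Hwf Hfy Hyx Hux; have [c Hwc] := fork_right_child Hwf.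
case: G_sst => Hstruct _; have [Hdesc _] := Hstruct w f c Hwf Hwc.
exact: Hdesc x y u Hyx Hux (st_sym Hfy) (touch_spec Hyx).2.
Qed.

Lemma touch_below_right_child w f c y x :
  fut G w f -> cont G w c -> st f y -> tch G y x -> descendant G c x.
Proof.
move=> Hwf Hwc Hfy Hyx; case: G_sst => _ Hsingle.
have [x0 [_ Hcx0 Hx0]] := Hsingle w f c Hwf Hwc.
by rewrite (Hx0 x (touch_ofI Hyx (st_sym Hfy))).
Qed.

Lemma future_thread_touch_unique w f y1 x1 y2 x2 : fut G w f ->
  st f y1 -> st f y2 -> tch G y1 x1 -> tch G y2 x2 -> x1 = x2.
Proof.
move=> Hwf Hfy1 Hfy2 Hyx1 Hyx2; have [c Hwc] := fork_right_child Hwf.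
case: G_sst => _ Hsingle; have [x0 [_ _ Hx0]] := Hsingle w f c Hwf Hwc.
rewrite (Hx0 x1 (touch_ofI Hyx1 (st_sym Hfy1))).
by rewrite (Hx0 x2 (touch_ofI Hyx2 (st_sym Hfy2))).
Qed.

(* The future parent of a touch is the last node of its thread: that last
   node also touches, hence touches the same node, hence is the same node. *)
Lemma touch_parent_last y x : tch G y x -> thread_last G y.
Proof.
move=> Hyx; apply/negPn/negP=> /not_last [z Hyz].
have [Hym _] := touch_spec Hyx.
have [l Hl Hyl] := exists_last y.
have Hlm : ~~ in_main G l.
  by apply: contra Hym => Hm; apply: st_trans Hm (st_sym (cont_connect_st Hyl)).
have [_ [x' /andP [Hlx' _]]] := last_nonmain_touches Hl Hlm.
have [w [f [Hwf Hfy]]] := nonmain_in_future_thread Hym.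
have Ex : x' = x.
  exact: future_thread_touch_unique Hwf (st_trans Hfy (cont_connect_st Hyl)) Hfy Hlx' Hyx.
subst x'; have [u Hux] := touch_has_local_parent Hyx.
rewrite (touch_parent_unique Hlx' Hyx Hux) in Hl.
by move/forallP: Hl => /(_ z); rewrite Hyz.
Qed.

Definition spawn_edge : rel V := fun a b => cont G a b || fut G a b.

Lemma spawn_connect_edge a b : connect spawn_edge a b -> connect E a b.
Proof.
apply: connect_sub => x y /orP [] H; apply: connect1.
  exact: cont_edge.
exact: fut_edge.
Qed.

Lemma cont_connect_spawn a b : connect (cont G) a b -> connect spawn_edge a b.
Proof. by apply: connect_sub => x y H; apply: connect1; rewrite /spawn_edge H. Qed.

(* Every node is spawned from the root: walk back to the start of its
   thread, then to the fork of that thread. *)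
Lemma spawned_from_root a : connect spawn_edge (root G) a.
Proof.
elim/(ancestor_ind edge_acyclic): a => a IH.
case Ha: (thread_first G a).
  case Hm: (in_main G a); first by rewrite (main_first Hm Ha).
  have [v /andP [Hva _]] := first_nonmain_forked Ha (negbT Hm).
  apply: connect_trans (IH v (connect1 (fut_edge Hva)) (edge_neq (fut_edge Hva))) _.
  by apply: connect1; rewrite /spawn_edge Hva orbT.
have [p Hpa] := not_first (negbT Ha).
apply: connect_trans (IH p (connect1 (cont_edge Hpa)) (edge_neq (cont_edge Hpa))) _.
by apply: connect1; rewrite /spawn_edge Hpa.
Qed.

Lemma spawn_split f n : connect spawn_edge f n ->
  st f n \/ exists w f', [/\ fut G w f', st f' n & connect spawn_edge f w].
Proof.
move/connectP=> [p Hp ->]; elim/last_ind: p Hp => [|p z IH] /=.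
  by left; apply: st_refl.
rewrite rcons_path last_rcons => /andP [Hp Hz].
have Hfz : connect spawn_edge f (last f p) by apply/connectP; exists p.
case/orP: Hz => Hz; last by right; exists (last f p), z; split=> //; apply: st_refl.
case: (IH Hp) => [Hf|[w [f' [Hwf' Hf' Hfw]]]].
  by left; apply: st_trans Hf (cont_st Hz).
by right; exists w, f'; split=> //; apply: st_trans Hf' (cont_st Hz).
Qed.

Definition right_descendant_shape (v c z : V) : Prop :=
  [\/ st v z,
      exists w f, [/\ fut G w f, st f z & connect E c w]
    | exists w f c', [/\ fut G w f, st f v, cont G w c' & connect E c' z]].

Lemma right_descendant_shape_cont v c a z : right_descendant_shape v c a ->
  cont G a z -> right_descendant_shape v c z.
Proof.
move=> Ha Haz; have Hst := cont_st Haz.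
case: Ha => [Hva|[w [f [Hwf Hfa Hcw]]]|[w [f [c' [Hwf Hfv Hwc' Hc'a]]]]].
- by apply: Or31; apply: st_trans Hva Hst.
- by apply: Or32; exists w, f; split=> //; apply: st_trans Hfa Hst.
- apply: Or33; exists w, f, c'; split=> //.
  exact: connect_trans Hc'a (connect1 (cont_edge Haz)).
Qed.

Lemma right_descendant_shapeP v c z : cont G v c -> connect E c z ->
  right_descendant_shape v c z.
Proof.
move=> Hvc; elim/(ancestor_ind edge_acyclic): z => z IH Hcz.
have [<-|Hne] := eqVneq c z; first by apply: Or31; apply: cont_st.
have [p Hcp Hpz] := connect_last_edge Hcz Hne.
have Dp := IH p (connect1 Hpz) (edge_neq Hpz) Hcp.
case/or3P: Hpz => Hpz; first exact: right_descendant_shape_cont Dp Hpz.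
  by apply: Or32; exists p, z; split=> //; apply: st_refl.
have [Hpm _] := touch_spec Hpz.
case: Dp => [Hvp|[w [f [Hwf Hfp Hcw]]]|[w [f [c' [Hwf Hfv Hwc' Hc'p]]]]].
- (* the touch leaves the thread of v: it is below the right child of its fork *)
  have Hvm : ~~ in_main G v by apply: contra Hpm => Hm; apply: st_trans Hm Hvp.
  have [w [f [Hwf Hfv]]] := nonmain_in_future_thread Hvm.
  have [c' Hwc'] := fork_right_child Hwf.
  apply: Or33; exists w, f, c'; split=> //.
  exact: touch_below_right_child Hwf Hwc' (st_trans Hfv Hvp) Hpz.
- (* the touch ends a thread forked below c: its local parent is below c *)
  have [u Hu] := touch_has_local_parent Hpz.
  have Hcu : connect E c u.
    exact: connect_trans Hcw (local_parent_below_fork Hwf Hfp Hpz Hu).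
  have Du := IH u (connect1 (cont_edge Hu)) (edge_neq (cont_edge Hu)) Hcu.
  exact: right_descendant_shape_cont Du Hu.
- apply: Or33; exists w, f, c'; split=> //.
  exact: connect_trans Hc'p (connect1 (tch_edge Hpz)).
Qed.

Lemma spawned_not_below_right_child v : forall f c, fut G v f -> cont G v c ->
  forall n, connect spawn_edge f n -> ~~ connect E c n.
Proof.
elim/(ancestor_ind edge_acyclic): v => v IHv f c Hvf Hvc n.
elim/(ancestor_ind edge_acyclic): n => n IHn Hfn; apply/negP=> Hcn.
case: (right_descendant_shapeP Hvc Hcn) =>
  [Hvn|[w [f' [Hwf' Hf'n Hcw]]]|[w [f' [c' [Hwf' Hf'v Hwc' Hc'n]]]]].
- (* n in the thread of v: f would reach v, closing a cycle through v -> f *)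
  case: (spawn_split Hfn) => [Hfn'|[w [f' [Hwf' Hf'n Hfw]]]].
    by move: (fut_other_thread Hvf); rewrite (st_trans Hvn (st_sym Hfn')).
  have Hf'v := first_connect (fut_first Hwf') (st_trans Hf'n (st_sym Hvn)).
  have Hfv : connect E f v.
    apply: connect_trans (spawn_connect_edge Hfw) _.
    exact: connect_trans (connect1 (fut_edge Hwf')) (cont_connect_edge Hf'v).
  by move: (edge_acyclic (fut_edge Hvf)); rewrite Hfv.
-
  have Hf'n' := cont_connect_edge (first_connect (fut_first Hwf') Hf'n).
  have Hwn : connect E w n := connect_trans (connect1 (fut_edge Hwf')) Hf'n'.
  have Hwn' : w != n.
    by apply/eqP=> Ewn; move: (edge_acyclic (fut_edge Hwf')); rewrite Ewn Hf'n'.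
  case: (spawn_split Hfn) => [Hfn'|[w' [f'' [Hwf'' Hf''n Hfw']]]].
    (* n in the thread of f: then w = v, and c would reach v *)
    have [Ewv _] := fork_thread_unique Hwf' Hvf (st_trans Hf'n (st_sym Hfn')).
    by subst w; move: (edge_acyclic (cont_edge Hvc)); rewrite Hcw.
  (* otherwise f spawns w, a strict ancestor of n reached from c *)
  have [Ew _] := fork_thread_unique Hwf'' Hwf' (st_trans Hf''n (st_sym Hf'n)).
  by subst w'; move: (IHn w Hwn Hwn' Hfw'); rewrite Hcw.
-
  have Hf'v' := first_connect (fut_first Hwf') Hf'v.
  have Hwv : connect E w v.
    exact: connect_trans (connect1 (fut_edge Hwf')) (cont_connect_edge Hf'v').
  have Hwv' : w != v.
    by apply: contraNneq (fut_other_thread Hwf') => ->; apply: st_sym.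
  have Hf'n : connect spawn_edge f' n.
    apply: connect_trans (cont_connect_spawn Hf'v') _; apply: connect_trans _ Hfn.
    by apply: connect1; rewrite /spawn_edge Hvf orbT.
  by move: (IHv w Hwv Hwv' f' c' Hwf' Hwc' n Hf'n); rewrite Hc'n.
Qed.

Lemma future_thread_not_below_right_child v f c n :
  fut G v f -> cont G v c -> st f n -> ~~ connect E c n.
Proof.
move=> Hvf Hvc Hfn; apply: (spawned_not_below_right_child Hvf Hvc).
exact: cont_connect_spawn (first_connect (fut_first Hvf) Hfn).
Qed.

(* Shape of the deque while the processor works in the thread of [z]: from
   the bottom, it holds the right children of the forks of the enclosing
   future threads, innermost first, down to the main thread. *)
Fixpoint deque_shape (z : V) (dq : seq V) : Prop :=
  if dq is c :: dq' then
    exists w f, [/\ fut G w f, cont G w c, st f z & deque_shape c dq']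
  else in_main G z.

Lemma deque_shape_st a b dq : st a b -> deque_shape a dq -> deque_shape b dq.
Proof.
case: dq => [|c dq] /= Hab; first by move=> Ha; apply: st_trans Ha Hab.
by case=> w [f [Hwf Hwc Hfa Hc]]; exists w, f; split=> //; apply: st_trans Hfa Hab.
Qed.

Lemma deque_right_child z dq n : deque_shape z dq -> n \in dq ->
  exists w f, fut G w f /\ cont G w n.
Proof.
elim: dq z => [|c dq IH] z //= [w [f [Hwf Hwc _ Hc]]].
by rewrite inE => /predU1P [->|/(IH c Hc)] //; exists w, f.
Qed.

Lemma deque_top z dq v f c : deque_shape z dq -> ~~ in_main G z ->
  fut G v f -> st f z -> cont G v c -> exists dq', dq = c :: dq'.
Proof.
case: dq => [/= -> //|c' dq' [w [f' [Hwf' Hwc' Hf'z _]]]] _ Hvf Hfz Hvc.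
have [Ewv _] := fork_thread_unique Hwf' Hvf (st_trans Hf'z (st_sym Hfz)).
by subst w; exists dq'; rewrite (cont_functional Hwc' Hvc).
Qed.

Definition current_spec (o : seq V) (cur : option V) (dq : seq V) : Prop :=
  if cur is Some z then [/\ z \notin o, forall p, E p z -> p \in o & deque_shape z dq]
  else exists l, [/\ l \in o, thread_last G l & deque_shape l dq].

Record exec_inv (o : seq V) (cur : option V) (dq : seq V) : Prop := ExecInv {
  inv_uniq : uniq o;
  inv_closed : forall a p, a \in o -> E p a -> p \in o;
  inv_current : current_spec o cur dq;
  inv_future_first : forall w f c, fut G w f -> cont G w c ->
    c \in o \/ cur = Some c -> forall a, st f a -> a \in o;
  inv_frontier : forall q n, q \in o -> spawn_edge q n ->
    [\/ n \in o, cur = Some n | n \in dq];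
  inv_deque_uniq : uniq dq;
  inv_deque : forall n, n \in dq ->
    [/\ n \notin o, cur != Some n & forall p, E p n -> p \in o] }.

Definition inv_state (s : state V) : Prop :=
  let: (o, cur, dq) := s in exec_inv o cur dq.

Lemma ready_parent o n p : ready G o n -> E p n -> p \in o.
Proof. by move/forallP=> /(_ p) /implyP. Qed.

Lemma ancestors_executed (o : seq V) : (forall a p, a \in o -> E p a -> p \in o) ->
  forall p a, connect E p a -> a \in o -> p \in o.
Proof.
move=> Ho p a /connectP [s Hs ->]; elim: s p Hs => [|q s IH] p //= /andP [Hpq Hs] Ha.
exact: Ho (IH q Hs Ha) Hpq.
Qed.

Lemma strict_ancestor_executed o z dq a : exec_inv o (Some z) dq ->
  connect E a z -> a != z -> a \in o.
Proof.
move=> Hinv Haz Hne; have [_ Hz _] := inv_current Hinv.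
have [p Hap Hpz] := connect_last_edge Haz Hne.
exact: (ancestors_executed (inv_closed Hinv) Hap (Hz p Hpz)).
Qed.

(* When the current node [z] touches [n], the local parent of [n] has not
   run: otherwise [n] would be executed, current, or a right child in the
   deque, and none of these is possible. *)
Lemma local_parent_pending o z dq n u : exec_inv o (Some z) dq ->
  tch G z n -> cont G u n -> u \notin rcons o z.
Proof.
move=> Hinv Hzn Hun; have [Hzo _ Sz] := inv_current Hinv.
rewrite mem_rcons inE; apply/negP=> /predU1P [Euz|Huo].
  by subst u; move: (touch_spec Hzn).2; rewrite cont_st.
case: (inv_frontier Hinv Huo (_ : spawn_edge u n)); first by rewrite /spawn_edge Hun.
- by move=> Hno; move: Hzo; rewrite (inv_closed Hinv Hno (tch_edge Hzn)).
- by case=> Ezn; move: (edge_neq (tch_edge Hzn)); rewrite Ezn eqxx.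
- move=> /(deque_right_child Sz) [w [f [Hwf Hwn]]].
  by move: (right_child_not_touch Hwf Hwn); rewrite (is_touchI Hzn Hun).
Qed.

(* The continuation child [n] of the current node [z] is ready once [z] has
   run: its possible touch parent [p] ends a future thread whose fork has
   its right child at or before [z], so that future thread is done. *)
Lemma cont_child_ready o z dq n : exec_inv o (Some z) dq ->
  cont G z n -> ready G (rcons o z) n.
Proof.
move=> Hinv Hzn; apply/forallP=> p; apply/implyP; rewrite mem_rcons inE.
case/or3P=> Hpn; first by rewrite (cont_injective Hpn Hzn) eqxx.
  by move: (fut_no_cont z Hpn); rewrite Hzn.
apply/orP; right; have [w [f [Hwf Hfp]]] := nonmain_in_future_thread (touch_spec Hpn).1.
have [c Hwc] := fork_right_child Hwf.
suff Hc : c \in o \/ Some z = Some c by exact: (inv_future_first Hinv Hwf Hwc Hc Hfp).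
have [Hco|Hco] := boolP (c \in o); [by left | right].
have [-> //|Hcz] := eqVneq c z.
have Hcn : connect E c n := touch_below_right_child Hwf Hwc Hfp Hpn.
have Hnc : c != n.
  by apply: contraTneq (is_touchI Hpn Hzn) => <-; exact: right_child_not_touch Hwf Hwc.
have [p' Hcp' Hp'n] := connect_last_edge Hcn Hnc.
case/or3P: Hp'n => Hp'n.
- rewrite (cont_injective Hp'n Hzn) in Hcp'.
  by move: Hco; rewrite (strict_ancestor_executed Hinv Hcp' Hcz).
- by move: (fut_no_cont z Hp'n); rewrite Hzn.
- rewrite (touch_parent_unique Hp'n Hpn Hzn) in Hcp'.
  by move: (future_thread_not_below_right_child Hwf Hwc Hfp); rewrite Hcp'.
Qed.

(* A non-fork whose child is ready after it runs continues in its thread: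
   a touch child is never ready, its local parent being pending. *)
Lemma ready_child_is_cont o x dq c : exec_inv o (Some x) dq -> ~~ is_fork G x ->
  E x c -> ready G (rcons o x) c -> cont G x c.
Proof.
move=> Hinv Hx /or3P [] // Hxc Hc; first by rewrite (is_forkI Hxc) in Hx.
have [u Huc] := touch_has_local_parent Hxc.
by move: (local_parent_pending Hinv Hxc Huc); rewrite (ready_parent Hc (cont_edge Huc)).
Qed.

Section RunCurrent.
Variables (o : seq V) (x : V) (dq : seq V).
Hypothesis Hinv : exec_inv o (Some x) dq.

Lemma run_uniq : uniq (rcons o x).
Proof. by have [Hxo _ _] := inv_current Hinv; rewrite rcons_uniq Hxo (inv_uniq Hinv). Qed.

Lemma run_closed a p : a \in rcons o x -> E p a -> p \in rcons o x.
Proof.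
have [_ Hx _] := inv_current Hinv; rewrite !mem_rcons !inE.
case/predU1P=> [->|Hao] Hpa; first by rewrite Hx ?orbT.
by rewrite (inv_closed Hinv Hao Hpa) orbT.
Qed.

Lemma run_future_first w f c : fut G w f -> cont G w c -> c \in rcons o x ->
  forall a, st f a -> a \in rcons o x.
Proof.
move=> Hwf Hwc; rewrite mem_rcons inE => Hc a Hfa; rewrite mem_rcons inE.
apply/orP; right; apply: (inv_future_first Hinv Hwf Hwc _ Hfa).
by case/predU1P: Hc => [->|]; [right | left].
Qed.

Lemma run_frontier q n : q \in o -> spawn_edge q n -> n \in rcons o x \/ n \in dq.
Proof.
move=> Hqo Hqn; rewrite mem_rcons inE.
case: (inv_frontier Hinv Hqo Hqn) => [->|[->]|->]; rewrite ?eqxx ?orbT.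
- by left.
- by left.
- by right.
Qed.

Lemma run_deque n : n \in dq -> n \notin rcons o x /\ forall p, E p n -> p \in rcons o x.
Proof.
move=> /(inv_deque Hinv) [Hno Hnx Hn]; rewrite mem_rcons inE negb_or Hno andbT.
split; first by apply: contraNneq Hnx => ->.
by move=> p /Hn Hpo; rewrite mem_rcons inE Hpo orbT.
Qed.

Lemma run_child_fresh n : E x n -> n \notin rcons o x.
Proof.
have [Hxo _ _] := inv_current Hinv => Hxn; rewrite mem_rcons inE negb_or.
rewrite eq_sym edge_neq //=; apply: contra Hxo => Hno; exact: (inv_closed Hinv Hno Hxn).
Qed.

Lemma run_child_not_pending n : E x n -> n \notin dq.
Proof.
have [Hxo _ _] := inv_current Hinv => Hxn; apply/negP=> /(inv_deque Hinv) [_ _ Hn].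
by rewrite (Hn x Hxn) in Hxo.
Qed.
End RunCurrent.

Lemma inv_fork_step o x f c dq : exec_inv o (Some x) dq -> fut G x f -> cont G x c ->
  exec_inv (rcons o x) (Some f) (c :: dq).
Proof.
move=> Hinv Hxf Hxc; have [_ _ Sx] := inv_current Hinv.
have Hfc : f != c by apply: contraTneq Hxc => <-; exact: fut_no_cont Hxf.
split.
- exact: run_uniq Hinv.
- exact: run_closed Hinv.
- split; first exact: (run_child_fresh Hinv (fut_edge Hxf)).
    by move=> p /(fut_child_parent Hxf) ->; rewrite mem_rcons mem_head.
  exists x, f; split=> //; first exact: st_refl.
  exact: deque_shape_st (cont_st Hxc) Sx.
- move=> w f' c' Hwf' Hwc' [Hc'|[Ec']].
    exact: (run_future_first Hinv Hwf' Hwc' Hc').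
  by subst c'; move: (fut_no_cont w Hxf); rewrite Hwc'.
- move=> q n; rewrite mem_rcons inE => /predU1P [->|Hqo] Hqn.
    case/orP: Hqn => [Hxn|Hxn]; last by apply: Or32; rewrite (fut_child_unique Hxn Hxf).
    by apply: Or33; rewrite (cont_functional Hxn Hxc) mem_head.
  case: (run_frontier Hinv Hqo Hqn) => Hn; first exact: Or31.
  by apply: Or33; rewrite inE Hn orbT.
- by rewrite /= (inv_deque_uniq Hinv) (run_child_not_pending Hinv (cont_edge Hxc)).
- move=> n; rewrite inE => /predU1P [->|Hn].
    split; first exact: (run_child_fresh Hinv (cont_edge Hxc)).
      by apply: contraNneq Hfc => -[->].
    by move=> p /(right_child_parent Hxf Hxc) ->; rewrite mem_rcons mem_head.
  have [Hno Hn'] := run_deque Hinv Hn; split=> //.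
  apply: contraTneq Hn => -[<-]; exact: (run_child_not_pending Hinv (fut_edge Hxf)).
Qed.

Lemma inv_cont_step o x c dq : exec_inv o (Some x) dq -> ~~ is_fork G x ->
  cont G x c -> ready G (rcons o x) c -> exec_inv (rcons o x) (Some c) dq.
Proof.
move=> Hinv Hx Hxc Hc; have [_ _ Sx] := inv_current Hinv.
split.
- exact: run_uniq Hinv.
- exact: run_closed Hinv.
- split; first exact: (run_child_fresh Hinv (cont_edge Hxc)).
    by move=> p; apply: ready_parent.
  exact: deque_shape_st (cont_st Hxc) Sx.
- move=> w f c' Hwf Hwc' [Hc'|[Ec']]; first exact: (run_future_first Hinv Hwf Hwc' Hc').
  subst c'; rewrite (cont_injective Hwc' Hxc) in Hwf.
  by rewrite (is_forkI Hwf) in Hx.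
- move=> q n; rewrite mem_rcons inE => /predU1P [->|Hqo] Hqn.
    case/orP: Hqn => [Hxn|Hxn]; last by rewrite (is_forkI Hxn) in Hx.
    by apply: Or32; rewrite (cont_functional Hxn Hxc).
  by case: (run_frontier Hinv Hqo Hqn) => Hn; [apply: Or31 | apply: Or33].
- exact: (inv_deque_uniq Hinv).
- move=> n Hn; have [Hno Hn'] := run_deque Hinv Hn; split=> //.
  apply: contraTneq Hn => -[<-]; exact: (run_child_not_pending Hinv (cont_edge Hxc)).
Qed.

Lemma inv_stop_step o x dq : exec_inv o (Some x) dq -> ~~ is_fork G x ->
  thread_last G x -> exec_inv (rcons o x) None dq.
Proof.
move=> Hinv Hx Hxl; have [_ _ Sx] := inv_current Hinv.
split.
- exact: run_uniq Hinv.
- exact: run_closed Hinv.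
- by exists x; rewrite mem_rcons mem_head.
- by move=> w f c Hwf Hwc [Hc|//]; apply: (run_future_first Hinv Hwf Hwc Hc).
- move=> q n; rewrite mem_rcons inE => /predU1P [->|Hqo] Hqn.
    case/orP: Hqn => [Hxn|Hxn]; last by rewrite (is_forkI Hxn) in Hx.
    by move/forallP: Hxl => /(_ n); rewrite Hxn.
  by case: (run_frontier Hinv Hqo Hqn) => Hn; [apply: Or31 | apply: Or33].
- exact: (inv_deque_uniq Hinv).
- by move=> n /(run_deque Hinv) [].
Qed.

(* The idle processor pops the bottom of its deque; this right child may
   start because the future thread of its fork, which contains the last
   executed node, has been fully executed. *)
Lemma inv_pop_step o y dq : exec_inv o None (y :: dq) -> exec_inv o (Some y) dq.
Proof.
move=> Hinv; have [l [Hlo Hll [w [f [Hwf Hwy Hfl Sy]]]]] := inv_current Hinv.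
have /andP [Hydq Hdq] := inv_deque_uniq Hinv.
have [Hyo _ Hy] := inv_deque Hinv (mem_head y dq).
split=> //.
- exact: (inv_uniq Hinv).
- exact: (inv_closed Hinv).
- move=> w' f' c' Hwf' Hwc' [Hc'|[Ec']].
    exact: (inv_future_first Hinv Hwf' Hwc' (or_introl Hc')).
  subst c'; rewrite (cont_injective Hwc' Hwy) in Hwf'.
  rewrite (fut_child_unique Hwf' Hwf) => a Hfa.
  have Hal := last_connect Hll (st_trans (st_sym Hfa) Hfl).
  exact: (ancestors_executed (inv_closed Hinv) (cont_connect_edge Hal) Hlo).
- move=> q n Hqo Hqn; case: (inv_frontier Hinv Hqo Hqn) => [Hno|//|].
    exact: Or31.
  by rewrite inE => /predU1P [->|Hn]; [apply: Or32 | apply: Or33].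
- move=> n Hn; have /(inv_deque Hinv) [Hno _ Hn'] : n \in y :: dq by rewrite inE Hn orbT.
  by split=> //; apply: contraNneq Hydq => -[->].
Qed.

Lemma inv_step s s' : step G s s' -> inv_state s -> inv_state s'.
Proof.
case=> [o x f c dq Hxf Hxc|o x c dq Hx Hxc Hc|o x dq Hx Hnr|o y dq] /= Hinv.
- exact: inv_fork_step.
- by apply: inv_cont_step => //; apply: ready_child_is_cont Hinv Hx Hxc Hc.
- apply: inv_stop_step => //; apply/forallP=> n; apply/negP=> Hxn.
  by move: (Hnr n (cont_edge Hxn)); rewrite (cont_child_ready Hinv Hxn).
- exact: inv_pop_step.
Qed.

Lemma inv_init : inv_state ([::], Some (root G), [::]).
Proof.
split=> //.
- split=> //; last exact: st_refl.
  by move=> p Hp; move: (no_edge_to_root p); rewrite Hp.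
- move=> w f c Hwf Hwc [//|[Ec]]; subst c.
  by move: (no_edge_to_root w); rewrite cont_edge.
Qed.

Lemma inv_steps s s' : steps G s s' -> inv_state s -> inv_state s'.
Proof. by elim=> // s1 s2 s3 /inv_step H12 _ IH /H12. Qed.

(* When the run is over, every node has been executed: the root has (it is
   an ancestor of the last executed node), and executed nodes have their
   spawned children executed. *)
Lemma run_complete ord : exec_inv ord None [::] -> forall a, a \in ord.
Proof.
move=> Hinv a; have [l [Hl _ _]] := inv_current Hinv.
have Hrl := spawn_connect_edge (spawned_from_root l).
have Hroot : root G \in ord := ancestors_executed (inv_closed Hinv) Hrl Hl.
have /connectP [p Hp ->] := spawned_from_root a.
elim: p (root G) Hroot Hp => [|q p IH] z //= Hz /andP [Hzq Hp].
by apply: IH Hp; case: (inv_frontier Hinv Hz Hzq).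
Qed.

Lemma step_log s s' : step G s s' ->
  s'.1.1 = if s.1.2 is Some x then rcons s.1.1 x else s.1.1.
Proof. by case. Qed.

Lemma steps_log s s' : steps G s s' -> exists r, s'.1.1 = s.1.1 ++ r.
Proof.
elim=> [s0|s1 s2 s3 /step_log E12 _ [r E23]]; first by exists [::]; rewrite cats0.
rewrite E23 E12; case: s1.1.2 => [x|]; last by exists r.
by exists (x :: r); rewrite cat_rcons.
Qed.

Lemma run_next s ord : steps G s (ord, None, [::]) -> (s.1.2 != None) || (s.2 != [::]) ->
  exists2 s2, step G s s2 & steps G s2 (ord, None, [::]).
Proof.
move Efin: (ord, None, [::]) => fin run.
by case: run Efin => [s0 Es0|s1 s2 s3 H12 H23 _ _]; [subst s0 | exists s2].
Qed.

Lemma step_pop o y dq s : step G (o, None, y :: dq) s -> s = (o, Some y, dq).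
Proof.
move Es: (o, None, y :: dq) => s0 Hs.
by case: Hs Es => // o' y' dq' [-> -> ->].
Qed.

Lemma run_reaches s s' a : steps G s s' -> a \in s'.1.1 -> a \notin s.1.1 ->
  exists o dq, steps G s (o, Some a, dq) /\ steps G (o, Some a, dq) s'.
Proof.
elim=> [s0|s1 s2 s3 H12 H23 IH] Ha Hna; first by rewrite Ha in Hna.
have [Ha2|Ha2] := boolP (a \in s2.1.1); last first.
  have [o [dq [H2 H3]]] := IH Ha Ha2.
  by exists o, dq; split=> //; apply: steps_cons H12 H2.
rewrite (step_log H12) in Ha2; move: Ha2 H12.
case: s1 Hna => [[o [x|]] dq] /= Hna; last by rewrite (negbTE Hna).
rewrite mem_rcons inE (negbTE Hna) orbF => /eqP-> H12.
by exists o, dq; split; [exact: steps_refl | exact: steps_cons H12 H23].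
Qed.

Lemma step_after_last o y dq s : exec_inv o (Some y) dq -> thread_last G y ->
  step G (o, Some y, dq) s -> s = (rcons o y, None, dq).
Proof.
move=> Hinv Hyl; move Es: (o, Some y, dq) => s0 Hs; have Hnc c : ~~ cont G y c.
  by move/forallP: Hyl.
case: Hs Es => [o' x f c dq' _ Hxc|o' x c dq' Hx Hxc Hc|o' x dq' _ _|//] [Eo Ex Edq];
  subst o' x dq' => //.
  by move: (Hnc c); rewrite Hxc.
by move: (Hnc c); rewrite (ready_child_is_cont Hinv Hx Hxc Hc).
Qed.

Lemma future_parent_then_right_child ord x y u v f c :
  seq_execution G ord -> tch G y x -> cont G u x ->
  fut G v f -> st f y -> cont G v c ->
  exists o r, [/\ ord = o ++ [:: y, c & r], y \notin o,
                  c \notin rcons o y & u \notin rcons o y].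
Proof.
move=> run Hyx Hux Hvf Hfy Hvc.
have all_run := run_complete (inv_steps run inv_init).
have [o [dq [to_y from_y]]] := run_reaches run (all_run y) isT.
have Iy : exec_inv o (Some y) dq := inv_steps to_y inv_init.
have [Hyo _ Sy] := inv_current Iy.
(* y ends its thread: the processor stops, then pops c, then runs c *)
have [s1 step_y from_s1] := run_next from_y isT.
have Es1 := step_after_last Iy (touch_parent_last Hyx) step_y; subst s1.
have [dq' Edq] := deque_top Sy (touch_spec Hyx).1 Hvf Hfy Hvc; subst dq.
have [s2 step_p from_s2] := run_next from_s1 isT.
have Es2 := step_pop step_p; subst s2.
have [Hco _ _] := inv_current (inv_step step_p (inv_step step_y Iy)).
have [s3 step_c from_s3] := run_next from_s2 isT.
have [r /= Eord] := steps_log from_s3; rewrite (step_log step_c) /= in Eord.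
exists o, r; split=> //; last exact: local_parent_pending Iy Hyx Hux.
by rewrite Eord -!cats1 -!catA.
Qed.
End Computation.

Lemma order_after (T : finType) (o r : seq T) (y c u : T) :
  y \notin o -> c \notin rcons o y -> u \notin rcons o y -> u \in o ++ [:: y, c & r] ->
  executed_before (o ++ [:: y, c & r]) y u /\
  executed_right_after (o ++ [:: y, c & r]) y c.
Proof.
rewrite !mem_rcons !inE !negb_or => Hyo /andP [Hcy Hco] /andP [Huy Huo] Hu.
rewrite /executed_before /executed_right_after Hu !mem_cat !inE !eqxx !orbT /=.
rewrite !index_cat (negbTE Hyo) (negbTE Huo) (negbTE Hco) /= eqxx eq_sym (negbTE Huy).
by rewrite eq_sym in Hcy; rewrite (negbTE Hcy) eqxx addn0 addn1 addnS ltnS leq_addr.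
Qed.

Theorem mainTheorem1 (V : finType) (G : fcomp V) (ord : seq V) :
  future_parallel G -> structured_single_touch G -> seq_execution G ord ->
  forall (x y u v f c : V),
    (* x is a touch, with future parent y and local parent u *)
    tch G y x -> cont G u x -> ~~ same_thread G y x ->
    (* v is the corresponding fork: its left child f starts the thread of y,
       and c is its right child *)
    fut G v f -> same_thread G f y -> cont G v c ->
    executed_before ord y u /\ executed_right_after ord y c.
Proof.
move=> Hfp Hsst run x y u v f c Hyx Hux _ Hvf Hfy Hvc.
have all_run := run_complete Hfp (inv_steps Hfp Hsst run (inv_init Hfp)).
have [o [r [Eord Hyo Hco Huo]]] :=
  future_parent_then_right_child Hfp Hsst run Hyx Hux Hvf Hfy Hvc.
by move: (all_run u); rewrite Eord; apply: order_after.
Qed.
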